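(* If $\lambda>\operatorname{cf}(\lambda)=\omega$, then $\mathfrak{r}_\lambda\le\mathfrak{i}_\lambda$.
   Context: For $\mathcal{A}\subseteq[\lambda]^\lambda$, $\operatorname{comb}(\mathcal{A})$ is the set of all sets $\bigcap\Gamma-\bigcup\Delta$ with $\Gamma,\Delta\in[\mathcal{A}]^{<\omega}$, $\Gamma\cap\Delta=\varnothing$. $\mathcal{A}$ is independent iff $\operatorname{comb}(\mathcal{A})\subseteq[\lambda]^\lambda$; $\mathfrak{i}_\lambda$ is the minimal size of a maximal independent family in $[\lambda]^\lambda$. A set $S$ splits $B\in[\lambda]^\lambda$ if $|B\cap S|=|B-S|=\lambda$. A family $\mathcal{A}\subseteq[\lambda]^\lambda$ is unsplittable if no single $S\in[\lambda]^\lambda$ splits every member of $\mathcal{A}$; the reaping number $\mathfrak{r}_\lambda$ is the minimal size of an unsplittable family in $[\lambda]^\lambda$. *)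

(* cardinal characteristics r_lambda, i_lambda on a cardinal lambda.
   lambda is represented as an initial ordinal: a type L with a strict
   well-order R such that every proper initial segment has smaller cardinality. *)
From Stdlib Require Import List Wellfounded Relations.

Set Implicit Arguments.

Definition injective {A B : Type} (f : A -> B) : Prop :=
  forall x y, f x = f y -> x = y.

Definition strict_well_order {L : Type} (R : L -> L -> Prop) : Prop :=
  well_founded R /\
  (forall x y z, R x y -> R y z -> R x z) /\
  (forall x y, x = y \/ R x y \/ R y x).

Definition initial_ordinal {L : Type} (R : L -> L -> Prop) : Prop :=
  forall y : L, ~ exists f : L -> {x : L | R x y}, injective f.

Definition uncountable (L : Type) : Prop :=
  ~ exists f : L -> nat, injective f.

(* cf(lambda) = omega (given lambda uncountable, hence infinite):
   there is an omega-sequence cofinal in lambda *)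
Definition countable_cofinality {L : Type} (R : L -> L -> Prop) : Prop :=
  exists c : nat -> L, forall x : L, exists n : nat, R x (c n).

(* S in [lambda]^lambda, i.e. |S| = lambda for S a subset of lambda *)
Definition big {L : Type} (S : L -> Prop) : Prop :=
  exists f : L -> L, injective f /\ forall x, S (f x).

(* the Boolean combination  /\Gamma - \/Delta  (empty intersection = lambda) *)
Definition comb_set {L : Type} (Gam Del : list (L -> Prop)) : L -> Prop :=
  fun x => (forall X, In X Gam -> X x) /\ (forall Y, In Y Del -> ~ Y x).

Definition independent {L : Type} (A : (L -> Prop) -> Prop) : Prop :=
  (forall X, A X -> big X) /\
  forall Gam Del : list (L -> Prop),
    (forall X, In X Gam -> A X) ->
    (forall X, In X Del -> A X) ->
    (forall X, In X Gam -> ~ In X Del) ->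
    big (comb_set Gam Del).

Definition maximal_independent {L : Type} (A : (L -> Prop) -> Prop) : Prop :=
  independent A /\
  forall B : (L -> Prop) -> Prop,
    independent B -> (forall X, A X -> B X) -> forall X, B X -> A X.

Definition splits {L : Type} (S B : L -> Prop) : Prop :=
  big (fun x => B x /\ S x) /\ big (fun x => B x /\ ~ S x).

Definition unsplittable {L : Type} (A : (L -> Prop) -> Prop) : Prop :=
  (forall X, A X -> big X) /\
  ~ exists S : L -> Prop, big S /\ forall X, A X -> splits S X.

Definition card_le {T : Type} (B A : T -> Prop) : Prop :=
  exists f : {X : T | B X} -> {X : T | A X}, injective f.

(* Let A be a maximal independent family.  The family comb(A) of all Boolean
   combinations ∩Γ - ∪Δ of A is unsplittable: if a big set S split every member
   of comb(A), then A ∪ {S} would still be independent, so S ∈ A by maximality,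
   and then S would have to split the combination S itself.  It remains to show
   |comb(A)| <= |A|.  A combination is coded by a pair of finite lists of members
   of A, and by Hessenberg's theorem |A × A| = |A| such pairs inject into A as
   soon as A is infinite.  A is infinite: for finite A the finitely many atoms of
   A are big, and choosing one half of every atom (using |L| = |L| + |L|, again
   by Hessenberg) yields a big set splitting every combination. *)
From Stdlib Require Import Lia List Classical ClassicalEpsilon ProofIrrelevance
  FunctionalExtensionality PropExtensionality Cantor.
From mathcomp Require classical_sets.

Set Implicit Arguments.
Unset Strict Implicit.

Lemma zorn_chain_unions (T : Type) (P : (T -> Prop) -> Prop) :
  (forall F : (T -> Prop) -> Prop, (forall X, F X -> P X) ->
     (forall X Y, F X -> F Y -> (forall t, X t -> Y t) \/ (forall t, Y t -> X t)) ->
     P (fun t => exists X, F X /\ X t)) ->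
  exists M, P M /\ forall N, P N -> (forall t, M t -> N t) -> forall t, N t -> M t.
Proof.
intros Hunion.
destruct (@classical_sets.Zorn_bigcup T P) as [M [PM Mmax]].
- intros F FP Ftot.
  replace (classical_sets.bigcup F (fun X => X)) with (fun t => exists X, F X /\ X t).
  + apply Hunion; [exact FP|]. intros X Y FX FY. destruct (Ftot X Y FX FY); auto.
  + apply functional_extensionality; intro t. apply propositional_extensionality.
    split; [intros [X [FX Xt]]|intros [X FX Xt]]; exists X; auto.
- exists M. split; [exact PM|]. intros N PN MN t Nt.
  apply NNPP; intro nMt. apply (Mmax N); [|exact PN].
  split; [exact MN|]. intro NM. exact (nMt (NM t Nt)).
Qed.

Section Comparability.
Variables (T U : Type) (X : T -> Prop) (Y : U -> Prop).

Record partial_matching (r : T * U -> Prop) : Prop := {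
  pm_sub : forall x y, r (x, y) -> X x /\ Y y;
  pm_fun : forall x y y', r (x, y) -> r (x, y') -> y = y';
  pm_inj : forall x x' y, r (x, y) -> r (x', y) -> x = x' }.

Lemma partial_matching_chain_union (F : (T * U -> Prop) -> Prop) :
  (forall r, F r -> partial_matching r) ->
  (forall r s, F r -> F s -> (forall t, r t -> s t) \/ (forall t, s t -> r t)) ->
  partial_matching (fun t => exists r, F r /\ r t).
Proof.
intros Fm Ftot. split.
- intros x y [r [Fr rt]]. exact (pm_sub (Fm r Fr) rt).
- intros x y y' [r [Fr rt]] [s [Fs st]].
  destruct (Ftot r s Fr Fs) as [rs|sr].
  + exact (pm_fun (Fm s Fs) (rs _ rt) st).
  + exact (pm_fun (Fm r Fr) rt (sr _ st)).
- intros x x' y [r [Fr rt]] [s [Fs st]].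
  destruct (Ftot r s Fr Fs) as [rs|sr].
  + exact (pm_inj (Fm s Fs) (rs _ rt) st).
  + exact (pm_inj (Fm r Fr) rt (sr _ st)).
Qed.

Lemma maximal_matching_exhausts :
  exists M, partial_matching M /\
    ((forall x, X x -> exists y, M (x, y)) \/ (forall y, Y y -> exists x, M (x, y))).
Proof.
destruct (@zorn_chain_unions _ partial_matching partial_matching_chain_union)
  as [M [HM Mmax]].
exists M. split; [exact HM|].
apply NNPP; intros Hno. apply not_or_and in Hno as [nX nY].
apply not_all_ex_not in nX as [x0 nx0]. apply imply_to_and in nx0 as [Xx0 nx0].
apply not_all_ex_not in nY as [y0 ny0]. apply imply_to_and in ny0 as [Yy0 ny0].
assert (Hext : partial_matching (fun p => M p \/ p = (x0, y0))).
{ split.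
  - intros x y [h|h]; [exact (pm_sub HM h)|injection h as -> ->; auto].
  - intros x y y' [h|h] [h'|h'].
    + exact (pm_fun HM h h').
    + injection h' as -> ->. exfalso; eauto.
    + injection h as -> ->. exfalso; eauto.
    + congruence.
  - intros x x' y [h|h] [h'|h'].
    + exact (pm_inj HM h h').
    + injection h' as -> ->. exfalso; eauto.
    + injection h as -> ->. exfalso; eauto.
    + congruence. }
apply nx0. exists y0. apply (Mmax _ Hext); auto.
Qed.

Lemma matching_injection (u0 : U) (r : T * U -> Prop) :
  partial_matching r -> (forall x, X x -> exists y, r (x, y)) ->
  exists f : T -> U, (forall x, X x -> Y (f x)) /\
    (forall x x', X x -> X x' -> f x = f x' -> x = x').
Proof.
intros Hr Htot.
set (f := fun x => epsilon (inhabits u0) (fun y => r (x, y))).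
assert (fr : forall x, X x -> r (x, f x)) by (intros x Xx; exact (epsilon_spec _ _ (Htot x Xx))).
exists f. split.
- intros x Xx. exact (proj2 (pm_sub Hr (fr x Xx))).
- intros x x' Xx Xx' E. apply (pm_inj Hr (fr x Xx)). rewrite E. exact (fr x' Xx').
Qed.
End Comparability.

Lemma cardinal_comparability (T U : Type) (t0 : T) (u0 : U) (X : T -> Prop) (Y : U -> Prop) :
  (exists f : T -> U, (forall x, X x -> Y (f x)) /\
     (forall x x', X x -> X x' -> f x = f x' -> x = x')) \/
  (exists g : U -> T, (forall y, Y y -> X (g y)) /\
     (forall y y', Y y -> Y y' -> g y = g y' -> y = y')).
Proof.
destruct (maximal_matching_exhausts X Y) as [M [HM [totX|totY]]].
- left. exact (matching_injection u0 HM totX).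
- right. apply (@matching_injection _ _ Y X t0 (fun p => M (snd p, fst p))); [|exact totY].
  split.
  + intros y x h. apply and_comm, (pm_sub HM h).
  + intros y x x' h h'. exact (pm_inj HM h h').
  + intros y y' x h h'. exact (pm_fun HM h h').
Qed.

Lemma to_nat_inj (p q : nat * nat) : to_nat p = to_nat q -> p = q.
Proof. intro E. rewrite <- (cancel_of_to p), <- (cancel_of_to q), E. reflexivity. Qed.

(* Zorn's lemma yields a maximal partial pairing
   D × D -> D; maximality forces T - D to inject into D, hence T into D. *)
Section Hessenberg.
Variables (T : Type) (d : nat -> T).
Hypothesis d_inj : forall m n, d m = d n -> m = n.

(* The domain of a graph g ⊆ (T × T) × T, read off its diagonal. *)
Definition gdom (g : (T * T) * T -> Prop) (x : T) : Prop := exists z, g ((x, x), z).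

Record pairing_graph (g : (T * T) * T -> Prop) : Prop := {
  pg_fun : forall p z z', g (p, z) -> g (p, z') -> z = z';
  pg_inj : forall p p' z, g (p, z) -> g (p', z) -> p = p';
  pg_closed : forall x y z, g ((x, y), z) -> gdom g x /\ gdom g y /\ gdom g z;
  pg_total : forall x y, gdom g x -> gdom g y -> exists z, g ((x, y), z);
  pg_seq : forall n, gdom g (d n) }.

Lemma gdom_mono (g g' : (T * T) * T -> Prop) (x : T) :
  (forall t, g t -> g' t) -> gdom g x -> gdom g' x.
Proof. intros s [z h]. exists z. exact (s _ h). Qed.

Lemma pairing_chain_union (F : ((T * T) * T -> Prop) -> Prop) :
  (forall g, F g -> (forall t, ~ g t) \/ pairing_graph g) ->
  (forall g h, F g -> F h -> (forall t, g t -> h t) \/ (forall t, h t -> g t)) ->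
  (forall t, ~ exists g, F g /\ g t) \/ pairing_graph (fun t => exists g, F g /\ g t).
Proof.
intros Fpg Ftot. set (V := fun t => exists g, F g /\ g t).
destruct (classic (exists t, V t)) as [[t0 Vt0]|nV]; [right|left; eauto].
assert (Vsub : forall g, F g -> forall t, g t -> V t) by (intros g Fg t gt; exists g; auto).
assert (member : forall t, V t -> exists g, F g /\ g t /\ pairing_graph g).
{ intros t [g [Fg gt]]. exists g. destruct (Fpg g Fg) as [e|pg]; [exfalso; exact (e t gt)|auto]. }
assert (common : forall t t', V t -> V t' -> exists g, F g /\ g t /\ g t' /\ pairing_graph g).
{ intros t t' Vt Vt'.
  destruct (member t Vt) as [g [Fg [gt pg]]], (member t' Vt') as [g' [Fg' [gt' pg']]].
  destruct (Ftot g g' Fg Fg') as [s|s]; [exists g'|exists g]; auto 6. }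
split.
- intros p z z' h h'. destruct (common _ _ h h') as [g [_ [a [b pg]]]]. exact (pg_fun pg a b).
- intros p p' z h h'. destruct (common _ _ h h') as [g [_ [a [b pg]]]]. exact (pg_inj pg a b).
- intros x y z h. destruct (member _ h) as [g [Fg [gt pg]]].
  destruct (pg_closed pg gt) as [a [b c]].
  split; [|split]; apply (gdom_mono (Vsub g Fg)); assumption.
- intros x y [z1 h1] [z2 h2]. destruct (common _ _ h1 h2) as [g [Fg [a [b pg]]]].
  destruct (pg_total pg (ex_intro _ z1 a) (ex_intro _ z2 b)) as [z hz].
  exists z. exact (Vsub g Fg _ hz).
- intro n. destruct (member _ Vt0) as [g [Fg [_ pg]]].
  exact (gdom_mono (Vsub g Fg) (pg_seq pg n)).
Qed.

Definition seed_graph (t : (T * T) * T) : Prop :=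
  exists a b, t = ((d a, d b), d (to_nat (a, b))).

Lemma seed_pairing_graph : pairing_graph seed_graph.
Proof.
assert (diag : forall a, gdom seed_graph (d a)).
{ intro a. exists (d (to_nat (a, a))). exists a, a. reflexivity. }
split.
- intros p z z' [a [b h]] [a' [b' h']]. injection h as -> ->.
  injection h' as ea eb ->. apply d_inj in ea, eb. subst. reflexivity.
- intros p p' z [a [b h]] [a' [b' h']]. injection h as -> ->.
  injection h' as -> ez. apply d_inj, (@to_nat_inj (a, b) (a', b')) in ez.
  injection ez as -> ->. reflexivity.
- intros x y z [a [b h]]. injection h as -> -> ->. auto.
- intros x y [z1 [a [a' h1]]] [z2 [b [b' h2]]]. injection h1 as -> _ _. injection h2 as -> _ _.
  exists (d (to_nat (a, b))). exists a, b. reflexivity.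
- exact diag.
Qed.

Lemma maximal_pairing_graph :
  exists M, pairing_graph M /\
    forall N, pairing_graph N -> (forall t, M t -> N t) -> forall t, N t -> M t.
Proof.
destruct (@zorn_chain_unions _ (fun g => (forall t, ~ g t) \/ pairing_graph g)
            pairing_chain_union) as [M [[Mempty|HM] Mmax]].
- exfalso. apply (Mempty ((d 0, d 0), d (to_nat (0, 0)))).
  apply (Mmax seed_graph); [right; exact seed_pairing_graph|intros t Mt; destruct (Mempty t Mt)|].
  exists 0, 0. reflexivity.
- exists M. split; [exact HM|]. intros N HN. apply Mmax. right; exact HN.
Qed.

Definition gapp (g : (T * T) * T -> Prop) (x y : T) : T :=
  epsilon (inhabits (d 0)) (fun z => g ((x, y), z)).

Section PairingFunction.
Variable g : (T * T) * T -> Prop.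
Hypothesis Hg : pairing_graph g.

Lemma gapp_graph x y : gdom g x -> gdom g y -> g ((x, y), gapp g x y).
Proof. intros Dx Dy. exact (epsilon_spec _ _ (pg_total Hg Dx Dy)). Qed.

Lemma gapp_dom x y : gdom g x -> gdom g y -> gdom g (gapp g x y).
Proof. intros Dx Dy. exact (proj2 (proj2 (pg_closed Hg (gapp_graph Dx Dy)))). Qed.

Lemma gapp_inj x y x' y' : gdom g x -> gdom g y -> gdom g x' -> gdom g y' ->
  gapp g x y = gapp g x' y' -> x = x' /\ y = y'.
Proof.
intros Dx Dy Dx' Dy' E. pose proof (gapp_graph Dx Dy) as h. rewrite E in h.
pose proof (pg_inj Hg h (gapp_graph Dx' Dy')) as E'. injection E'. auto.
Qed.
End PairingFunction.


(* A pairing graph whose domain D has a disjoint copy e[D] extends to a pairing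
   graph on D ∪ e[D]: the new pairs are sent injectively into e[D], since
   (D ∪ e[D])² ≅ D² × 4 injects into D ≅ e[D]. *)
Section Extension.
Variables (M : (T * T) * T -> Prop) (e : T -> T).
Hypothesis HM : pairing_graph M.
Hypothesis e_out : forall x, gdom M x -> ~ gdom M (e x).
Hypothesis e_inj : forall x x', gdom M x -> gdom M x' -> e x = e x' -> x = x'.

Let D := gdom M.

Definition copy (y : T) : Prop := exists x, D x /\ y = e x.

Let DE (x : T) : Prop := D x \/ copy x.

Lemma copy_out y : copy y -> ~ D y.
Proof. intros [x [Dx ->]]. exact (e_out Dx). Qed.

(* D ∪ e[D] embeds into D × {0, 1} via (retract, tag). *)
Definition retract (x : T) : T :=
  if excluded_middle_informative (D x) then x
  else epsilon (inhabits (d 0)) (fun x' => D x' /\ x = e x').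

Definition tag (x : T) : nat := if excluded_middle_informative (D x) then 0 else 1.

Lemma retract_copy x : copy x -> D (retract x) /\ x = e (retract x).
Proof.
intros Cx. unfold retract. destruct (excluded_middle_informative (D x)) as [Dx|_].
- exfalso. exact (copy_out Cx Dx).
- exact (epsilon_spec _ _ Cx).
Qed.

Lemma retract_dom x : DE x -> D (retract x).
Proof.
intros [Dx|Cx]; [|exact (proj1 (retract_copy Cx))].
unfold retract. destruct (excluded_middle_informative (D x)); [exact Dx|contradiction].
Qed.

Lemma retract_inj x x' : DE x -> DE x' -> retract x = retract x' -> tag x = tag x' -> x = x'.
Proof.
intros Hx Hx'. unfold tag.
destruct (excluded_middle_informative (D x)) as [Dx|nDx], (excluded_middle_informative (D x')) as [Dx'|nDx'];
  try discriminate; intros E _.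
- unfold retract in E.
  destruct (excluded_middle_informative (D x)), (excluded_middle_informative (D x')); tauto.
- destruct Hx as [|Cx]; [contradiction|]. destruct Hx' as [|Cx']; [contradiction|].
  rewrite (proj2 (retract_copy Cx)), (proj2 (retract_copy Cx')), E. reflexivity.
Qed.

Definition code (x y : T) : T :=
  e (gapp M (gapp M (retract x) (retract y)) (d (to_nat (tag x, tag y)))).

Lemma code_pre_dom x y : DE x -> DE y ->
  D (gapp M (gapp M (retract x) (retract y)) (d (to_nat (tag x, tag y)))).
Proof.
intros Hx Hy. apply (gapp_dom HM); [apply (gapp_dom HM)|apply (pg_seq HM)]; apply retract_dom; assumption.
Qed.

Lemma code_copy x y : DE x -> DE y -> copy (code x y).
Proof. intros Hx Hy. exists (gapp M (gapp M (retract x) (retract y)) (d (to_nat (tag x, tag y)))). split; [exact (code_pre_dom Hx Hy)|reflexivity]. Qed.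

Lemma code_inj x y x' y' : DE x -> DE y -> DE x' -> DE y' ->
  code x y = code x' y' -> x = x' /\ y = y'.
Proof.
intros Hx Hy Hx' Hy' E.
apply e_inj in E; [|exact (code_pre_dom Hx Hy)|exact (code_pre_dom Hx' Hy')].
apply (gapp_inj HM) in E as [E Etag];
  [|apply (gapp_dom HM)|apply (pg_seq HM)|apply (gapp_dom HM)|apply (pg_seq HM)];
  try apply retract_dom; try assumption.
apply (gapp_inj HM) in E as [Ex Ey]; try apply retract_dom; try assumption.
apply d_inj, (@to_nat_inj (tag x, tag y) (tag x', tag y')) in Etag.
injection Etag as Tx Ty. split; apply retract_inj; assumption.
Qed.

Definition extended_graph (t : (T * T) * T) : Prop :=
  M t \/ exists x y, t = ((x, y), code x y) /\ DE x /\ DE y /\ (copy x \/ copy y).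

Lemma extended_dom x : gdom extended_graph x <-> DE x.
Proof.
split.
- intros [z [Mt|[x' [y' [ht [Hx' _]]]]]].
  + left. exact (proj1 (pg_closed HM Mt)).
  + injection ht as -> _ _. exact Hx'.
- intros [Dx|Cx].
  + exact (gdom_mono (fun t Mt => or_introl Mt) Dx).
  + exists (code x x). right. exists x, x. unfold DE. auto.
Qed.

Lemma fresh_pairs x y z : copy x \/ copy y -> ~ M ((x, y), z).
Proof.
intros C Mt. destruct (pg_closed HM Mt) as [Dx [Dy _]].
destruct C as [C|C]; exact (copy_out C ltac:(assumption)).
Qed.

Lemma fresh_values x y p : DE x -> DE y -> ~ M (p, code x y).
Proof.
intros Hx Hy Mt. destruct p as [a b].
exact (copy_out (code_copy Hx Hy) (proj2 (proj2 (pg_closed HM Mt)))).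
Qed.

Lemma extended_pairing_graph : pairing_graph extended_graph.
Proof.
split.
- intros p z z' [Mt|[x [y [ht [Hx [Hy C]]]]]] [Mt'|[x' [y' [ht' [Hx' [Hy' C']]]]]].
  + exact (pg_fun HM Mt Mt').
  + injection ht' as -> ->. exfalso. exact (fresh_pairs C' Mt).
  + injection ht as -> ->. exfalso. exact (fresh_pairs C Mt').
  + injection ht as -> ->. injection ht' as -> -> ->. reflexivity.
- intros p p' z [Mt|[x [y [ht [Hx [Hy C]]]]]] [Mt'|[x' [y' [ht' [Hx' [Hy' C']]]]]].
  + exact (pg_inj HM Mt Mt').
  + injection ht' as -> ->. exfalso. exact (fresh_values Hx' Hy' Mt).
  + injection ht as -> ->. exfalso. exact (fresh_values Hx Hy Mt').
  + injection ht as -> ->. injection ht' as -> E.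
    destruct (code_inj Hx Hy Hx' Hy' E) as [-> ->]. reflexivity.
- intros x y z [Mt|[x' [y' [ht [Hx [Hy C]]]]]]; rewrite !extended_dom.
  + destruct (pg_closed HM Mt) as [Dx [Dy Dz]]. unfold DE. auto.
  + injection ht as -> -> ->. split; [|split]; [exact Hx|exact Hy|right; exact (code_copy Hx Hy)].
- intros x y Hx Hy. apply extended_dom in Hx, Hy.
  destruct (classic (D x /\ D y)) as [[Dx Dy]|nD].
  + destruct (pg_total HM Dx Dy) as [z hz]. exists z. left. exact hz.
  + exists (code x y). right. exists x, y. repeat split; try assumption.
    destruct Hx as [Dx|Cx]; [|left; exact Cx]. destruct Hy as [Dy|Cy]; [|right; exact Cy].
    exfalso. exact (nD (conj Dx Dy)).
- intro n. apply extended_dom. left. exact (pg_seq HM n).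
Qed.

Lemma extended_graph_grows : exists t, extended_graph t /\ ~ M t.
Proof.
assert (C : copy (e (d 0))) by (exists (d 0); split; [exact (pg_seq HM 0)|reflexivity]).
exists ((e (d 0), e (d 0)), code (e (d 0)) (e (d 0))). split.
- right. exists (e (d 0)), (e (d 0)). unfold DE. auto.
- exact (fresh_pairs (or_introl C)).
Qed.
End Extension.


(* In a maximal pairing graph the complement of the domain injects into the
   domain: otherwise the domain has a disjoint copy and the graph extends. *)
Lemma maximal_graph_absorbs (M : (T * T) * T -> Prop) : pairing_graph M ->
  (forall N, pairing_graph N -> (forall t, M t -> N t) -> forall t, N t -> M t) ->
  exists j : T -> T, (forall x, ~ gdom M x -> gdom M (j x)) /\
    (forall x x', ~ gdom M x -> ~ gdom M x' -> j x = j x' -> x = x').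
Proof.
intros HM Mmax.
destruct (cardinal_comparability (d 0) (d 0) (fun x => ~ gdom M x) (gdom M))
  as [Hj|[e [e_out e_inj]]]; [exact Hj|exfalso].
destruct (extended_graph_grows HM e_out) as [t [Nt nMt]].
apply nMt. exact (Mmax _ (extended_pairing_graph HM e_out e_inj) (fun t Mt => or_introl Mt) t Nt).
Qed.

Theorem square_injection :
  exists p : T -> T -> T, forall a b a' b', p a b = p a' b' -> a = a' /\ b = b'.
Proof.
destruct maximal_pairing_graph as [M [HM Mmax]].
destruct (maximal_graph_absorbs HM Mmax) as [j [j_dom j_inj]].
assert (d0_dom : gdom M (d 0)) by exact (pg_seq HM 0).
assert (d1_dom : gdom M (d 1)) by exact (pg_seq HM 1).
(* T injects into the domain: x ↦ (x, d 0) on it and x ↦ (j x, d 1) off it. *)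
set (q := fun x => if excluded_middle_informative (gdom M x)
                   then gapp M x (d 0) else gapp M (j x) (d 1)).
assert (q_dom : forall x, gdom M (q x)).
{ intro x. unfold q. destruct (excluded_middle_informative (gdom M x)) as [Dx|nDx];
    apply (gapp_dom HM); auto. }
assert (q_inj : forall x x', q x = q x' -> x = x').
{ intros x x'. unfold q.
  destruct (excluded_middle_informative (gdom M x)) as [Dx|nDx],
    (excluded_middle_informative (gdom M x')) as [Dx'|nDx'];
    intro E; apply (gapp_inj HM) in E as [E1 E2]; auto;
    try (apply d_inj in E2; discriminate). }
exists (fun x y => gapp M (q x) (q y)). intros a b a' b' E.
apply (gapp_inj HM) in E as [E1 E2]; auto.
Qed.
End Hessenberg.

Lemma finite_or_sequence (T : Type) (P : T -> Prop) :
  (exists l : list T, forall x, P x -> In x l) \/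
  exists s : nat -> T, (forall m n, s m = s n -> m = n) /\ forall n, P (s n).
Proof.
destruct (classic (exists l : list T, forall x, P x -> In x l)) as [fin|inf]; [left; exact fin|right].
assert (fresh : forall l : list T, exists x, P x /\ ~ In x l).
{ intro l. apply NNPP; intro none. apply inf. exists l. intros x Px.
  apply NNPP; intro nx. apply none. exists x. auto. }
destruct (fresh nil) as [t0 _].
set (pick := fun l : list T => epsilon (inhabits t0) (fun x => P x /\ ~ In x l)).
assert (pick_spec : forall l, P (pick l) /\ ~ In (pick l) l) by (intro l; exact (epsilon_spec _ _ (fresh l))).
set (prefix := fix prefix (n : nat) : list T :=
       match n with O => nil | S k => pick (prefix k) :: prefix k end).
assert (earlier : forall m n, m < n -> In (pick (prefix m)) (prefix n)).
{ intros m n lt. induction n as [|n IH]; [lia|].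
  simpl. destruct (PeanoNat.Nat.eq_dec m n) as [->|ne]; [left; reflexivity|right; apply IH; lia]. }
exists (fun n => pick (prefix n)). split; [|intro n; apply pick_spec].
intros m n E. destruct (PeanoNat.Nat.lt_trichotomy m n) as [lt|[eq|lt]]; [exfalso| exact eq|exfalso].
- apply (proj2 (pick_spec (prefix n))). rewrite <- E. exact (earlier m n lt).
- apply (proj2 (pick_spec (prefix m))). rewrite E. exact (earlier n m lt).
Qed.

Section ListCoding.
Variables (S : Type) (s : nat -> S) (p : S -> S -> S).
Hypothesis s_inj : forall m n, s m = s n -> m = n.
Hypothesis p_inj : forall a b a' b', p a b = p a' b' -> a = a' /\ b = b'.

Definition list_code (l : list S) : S := p (s (length l)) (fold_right p (s 0) l).

Lemma list_code_inj l l' : list_code l = list_code l' -> l = l'.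
Proof.
intro E. apply p_inj in E as [Elen Efold]. apply s_inj in Elen.
revert l' Elen Efold. induction l as [|x l IH]; intros [|x' l'] Elen Efold; try discriminate; [reflexivity|].
simpl in Efold. apply p_inj in Efold as [-> Efold]. f_equal. apply IH; auto.
Qed.
End ListCoding.

Section IndependentFamilies.
Variable L : Type.

Lemma big_mono (S S' : L -> Prop) : big S -> (forall x, S x -> S' x) -> big S'.
Proof. intros [f [f_inj fS]] sub. exists f. auto. Qed.

Lemma big_inhabited (l0 : L) (S : L -> Prop) : big S -> exists x, S x.
Proof. intros [f [_ fS]]. exists (f l0). apply fS. Qed.

Definition admissible (A : (L -> Prop) -> Prop) (Gam Del : list (L -> Prop)) : Prop :=
  (forall X, In X Gam -> A X) /\ (forall X, In X Del -> A X) /\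
  (forall X, In X Gam -> ~ In X Del).

Definition combinations (A : (L -> Prop) -> Prop) (C : L -> Prop) : Prop :=
  exists Gam Del, admissible A Gam Del /\ C = comb_set Gam Del.

Lemma admissible_big A Gam Del : independent A -> admissible A Gam Del -> big (comb_set Gam Del).
Proof. intros [_ A_ind] [HG [HD disj]]. exact (A_ind Gam Del HG HD disj). Qed.

Let eq_dec (X Y : L -> Prop) : {X = Y} + {X <> Y} := excluded_middle_informative (X = Y).

Lemma independent_extension A S : independent A -> big S ->
  (forall Gam Del, admissible A Gam Del -> splits S (comb_set Gam Del)) ->
  independent (fun X => A X \/ X = S).
Proof.
intros [A_big A_ind] bS S_splits. split; [intros X [AX| ->]; auto|].
intros Gam Del HG HD disj.
set (Gam' := remove eq_dec S Gam). set (Del' := remove eq_dec S Del).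
assert (adm : admissible A Gam' Del').
{ split; [|split].
  - intros X h. apply in_remove in h as [h nS]. destruct (HG X h); [auto|contradiction].
  - intros X h. apply in_remove in h as [h nS]. destruct (HD X h); [auto|contradiction].
  - intros X h h'. apply in_remove in h as [h _], h' as [h' _]. exact (disj X h h'). }
(* the combination for (Γ, Δ) is the part inside or outside S of that for (Γ', Δ') *)
assert (drop_S : forall x, comb_set Gam' Del' x ->
          (In S Gam -> S x) -> (In S Del -> ~ S x) -> comb_set Gam Del x).
{ intros x [inG inD] SG SD. split.
  - intros X XG. destruct (eq_dec X S) as [->|ne]; [exact (SG XG)|apply inG, in_in_remove; auto].
  - intros Y YD. destruct (eq_dec Y S) as [->|ne]; [exact (SD YD)|apply inD, in_in_remove; auto]. }
destruct (S_splits Gam' Del' adm) as [inS outS].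
destruct (classic (In S Gam)) as [SG|nSG].
- apply (big_mono inS). intros x [Cx Sx]. apply (drop_S x Cx); auto.
  intros SD. exfalso. exact (disj S SG SD).
- apply (big_mono outS). intros x [Cx nSx]. apply (drop_S x Cx); auto.
  intros SG. contradiction.
Qed.

(* The heart of the argument: no big set splits every combination of a
   maximal independent family A (it would belong to A and split itself). *)
Lemma no_universal_splitter (l0 : L) A S : maximal_independent A -> big S ->
  ~ (forall Gam Del, admissible A Gam Del -> splits S (comb_set Gam Del)).
Proof.
intros [A_indep A_max] bS S_splits.
assert (AS : A S).
{ apply (A_max _ (independent_extension A_indep bS S_splits)); auto. }
assert (adm : admissible A (S :: nil) nil).
{ split; [|split]; [intros X [<-|[]]; exact AS|intros X []|intros X _ []]. }
destruct (S_splits _ _ adm) as [_ outS].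
destruct (big_inhabited l0 outS) as [x [[inG _] nSx]].
exact (nSx (inG S (or_introl eq_refl))).
Qed.

Lemma combinations_unsplittable (l0 : L) A : maximal_independent A -> unsplittable (combinations A).
Proof.
intros HA. split.
- intros C [Gam [Del [adm ->]]]. exact (admissible_big (proj1 HA) adm).
- intros [S [bS S_splits]]. apply (no_universal_splitter l0 HA bS).
  intros Gam Del adm. apply S_splits. exists Gam, Del. auto.
Qed.

End IndependentFamilies.

Definition decb (P : Prop) : bool := if excluded_middle_informative P then true else false.

Lemma decb_true (P : Prop) : decb P = true <-> P.
Proof. unfold decb. destruct (excluded_middle_informative P); split; auto; discriminate. Qed.

(* A finite independent family A, listed by lst, cuts L into atoms: the classes
   of points lying in the same members of A. *)
Section Atoms.
Variables (L : Type) (A : (L -> Prop) -> Prop) (lst : list (L -> Prop)).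
Hypothesis lst_cov : forall X, A X -> In X lst.

Definition atom (x y : L) : Prop := forall X, In X lst -> A X -> (X y <-> X x).

Lemma atom_eq x y : atom x y -> atom y = atom x.
Proof.
intros axy. apply functional_extensionality; intro z. apply propositional_extensionality.
split; intros h X Xl AX; rewrite (h X Xl AX); [|symmetry]; exact (axy X Xl AX).
Qed.

Lemma atom_big x : independent A -> big (atom x).
Proof.
intros A_indep.
set (Gam := filter (fun X => decb (A X /\ X x)) lst).
set (Del := filter (fun X => decb (A X /\ ~ X x)) lst).
assert (inG : forall X, In X Gam <-> In X lst /\ A X /\ X x)
  by (intro X; unfold Gam; rewrite filter_In, decb_true; tauto).
assert (inD : forall X, In X Del <-> In X lst /\ A X /\ ~ X x)
  by (intro X; unfold Del; rewrite filter_In, decb_true; tauto).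
assert (adm : admissible A Gam Del).
{ split; [|split]; intros X; rewrite ?inG, ?inD; tauto. }
apply (big_mono (admissible_big A_indep adm)). intros y [yG yD] X Xl AX. split.
- intros Xy. apply NNPP; intro nXx. apply (yD X); [apply inD; auto|exact Xy].
- intros Xx. apply yG, inG. auto.
Qed.

Lemma atom_sub Gam Del x : admissible A Gam Del -> comb_set Gam Del x ->
  forall y, atom x y -> comb_set Gam Del y.
Proof.
intros [HG [HD _]] [inG inD] y axy. split.
- intros X XG. apply (axy X (lst_cov (HG X XG)) (HG X XG)). exact (inG X XG).
- intros Y YD Yy. apply (inD Y YD). apply (axy Y (lst_cov (HD Y YD)) (HD Y YD)). exact Yy.
Qed.
End Atoms.

Section DoublingSpace.
Variables (L : Type) (e0 e1 : L -> L).
Hypothesis e0_inj : injective e0.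
Hypothesis e1_inj : injective e1.
Hypothesis e_disj : forall x y, e0 x <> e1 y.

(* As |L| = |L| + |L|, every big set is the union of two disjoint big sets. *)
Lemma big_halves (C : L -> Prop) : big C ->
  exists H : L -> Prop, (forall x, H x -> C x) /\ big H /\ big (fun x => C x /\ ~ H x).
Proof.
intros [f [f_inj fC]]. exists (fun y => exists x, y = f (e0 x)). split; [|split].
- intros y [x ->]. apply fC.
- exists (fun x => f (e0 x)). split; [intros x y E; apply e0_inj, f_inj, E|intro x; exists x; reflexivity].
- exists (fun x => f (e1 x)). split; [intros x y E; apply e1_inj, f_inj, E|].
  intro x. split; [apply fC|]. intros [x' E]. apply f_inj in E. exact (e_disj (eq_sym E)).
Qed.

(* A maximal independent family on L is infinite: otherwise choosing one half of
   every atom gives a big set splitting every combination. *)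
Lemma maximal_independent_infinite (l0 : L) A (lst : list (L -> Prop)) :
  maximal_independent A -> ~ (forall X, A X -> In X lst).
Proof.
intros HA lst_cov.
set (half := fun C => epsilon (inhabits (fun _ : L => False))
               (fun H => (forall x, H x -> C x) /\ big H /\ big (fun x => C x /\ ~ H x))).
assert (half_spec : forall C, big C ->
          (forall x, half C x -> C x) /\ big (half C) /\ big (fun x => C x /\ ~ half C x))
  by (intros C bC; exact (epsilon_spec _ _ (big_halves bC))).
set (S := fun y => half (atom A lst y) y).
assert (S_splits : forall Gam Del, admissible A Gam Del -> splits S (comb_set Gam Del)).
{ intros Gam Del adm.
  destruct (big_inhabited l0 (admissible_big (proj1 HA) adm)) as [x0 Cx0].
  destruct (half_spec _ (atom_big lst x0 (proj1 HA))) as [half_sub [inS outS]].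
  split; [apply (big_mono inS)|apply (big_mono outS)];
    [intros y Hy; pose proof (half_sub y Hy) as ay|intros y [ay nHy]];
    (split; [exact (atom_sub lst_cov adm Cx0 ay)|unfold S; rewrite (atom_eq ay); assumption]). }
assert (adm0 : admissible A nil nil) by (split; [|split]; intros X []).
apply (no_universal_splitter l0 HA (S := S)); [|exact S_splits].
destruct (S_splits nil nil adm0) as [inS _]. apply (big_mono inS). tauto.
Qed.
End DoublingSpace.

Lemma lift_list (T : Type) (A : T -> Prop) (l : list T) :
  (forall X, In X l -> A X) -> exists l' : list {X | A X}, map (@proj1_sig _ _) l' = l.
Proof.
induction l as [|X l IH]; intros HA; [exists nil; reflexivity|].
destruct IH as [l' E]; [intros Y h; apply HA; right; exact h|].
exists (exist _ X (HA X (or_introl eq_refl)) :: l'). simpl. rewrite E. reflexivity.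
Qed.

(* For infinite A, |comb(A)| <= |A|: a combination is coded by a pair of lists
   of members of A, and pairs of lists of an infinite set inject into it. *)
Lemma combinations_card_le (L : Type) (A : (L -> Prop) -> Prop) (s : nat -> {X | A X}) :
  (forall m n, s m = s n -> m = n) -> card_le (combinations A) A.
Proof.
intros s_inj. destruct (square_injection s_inj) as [p p_inj].
assert (codes : forall c : {C | combinations A C}, exists GD : list {X | A X} * list {X | A X},
          proj1_sig c = comb_set (map (@proj1_sig _ _) (fst GD)) (map (@proj1_sig _ _) (snd GD))).
{ intros [C hC]. simpl. destruct hC as [Gam [Del [[HG [HD _]] ->]]].
  destruct (lift_list HG) as [Gam' <-], (lift_list HD) as [Del' <-]. exists (Gam', Del'). reflexivity. }
set (lists := fun c => proj1_sig (constructive_indefinite_description _ (codes c))).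
assert (lists_spec : forall c, proj1_sig c = comb_set (map (@proj1_sig _ _) (fst (lists c)))
                                                     (map (@proj1_sig _ _) (snd (lists c))))
  by (intro c; exact (proj2_sig (constructive_indefinite_description _ (codes c)))).
exists (fun c => p (list_code s p (fst (lists c))) (list_code s p (snd (lists c)))).
intros c1 c2 E. apply p_inj in E as [E1 E2].
apply (list_code_inj s_inj p_inj) in E1, E2.
assert (E : proj1_sig c1 = proj1_sig c2) by (rewrite (lists_spec c1), (lists_spec c2), E1, E2; reflexivity).
destruct c1, c2. apply subset_eq_compat. exact E.
Qed.

Lemma uncountable_sequence (L : Type) : uncountable L ->
  exists s : nat -> L, forall m n, s m = s n -> m = n.
Proof.
intros Hunc. destruct (finite_or_sequence (fun _ : L => True)) as [[l cov]|[s [s_inj _]]];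
  [exfalso|exists s; exact s_inj].
(* a finite L injects into nat by positions in the list l *)
apply Hunc. exists (fun x => epsilon (inhabits 0) (fun n => nth_error l n = Some x)).
intros x y E.
pose proof (epsilon_spec (inhabits 0) _ (In_nth_error _ _ (cov x I))) as hx.
pose proof (epsilon_spec (inhabits 0) _ (In_nth_error _ _ (cov y I))) as hy.
simpl in hx, hy. rewrite E, hy in hx. injection hx. auto.
Qed.

Lemma maximal_independent_sequence (L : Type) (s : nat -> L) (A : (L -> Prop) -> Prop) :
  (forall m n, s m = s n -> m = n) -> maximal_independent A ->
  exists t : nat -> {X | A X}, forall m n, t m = t n -> m = n.
Proof.
intros s_inj HA. destruct (square_injection s_inj) as [p p_inj].
destruct (finite_or_sequence A) as [[l cov]|[t [t_inj At]]].
- (* the two injections x ↦ p x (s 0), x ↦ p x (s 1) double L *)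
  exfalso. refine (maximal_independent_infinite (e0 := fun x => p x (s 0)) (e1 := fun x => p x (s 1))
                     _ _ _ (s 0) HA cov).
  + intros x y E. apply p_inj in E. tauto.
  + intros x y E. apply p_inj in E. tauto.
  + intros x y E. apply p_inj in E as [_ E]. apply s_inj in E. discriminate.
- exists (fun n => exist _ (t n) (At n)). intros m n E. apply t_inj. exact (f_equal (@proj1_sig _ _) E).
Qed.

Theorem claim2p7 (L : Type) (R : L -> L -> Prop)
  (HR : strict_well_order R) (Hcard : initial_ordinal R)
  (Hunc : uncountable L) (Hcf : countable_cofinality R) :
  forall A : (L -> Prop) -> Prop, maximal_independent A ->
    exists B : (L -> Prop) -> Prop, unsplittable B /\ card_le B A.
Proof.
intros A HA.
destruct (uncountable_sequence Hunc) as [s s_inj].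
destruct (maximal_independent_sequence s_inj HA) as [t t_inj].
exists (combinations A). split.
- exact (combinations_unsplittable (s 0) HA).
- exact (combinations_card_le t_inj).
Qed.
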